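(* Let $\mathcal G$ be a partition of $[n]$ into sets of size $\tau$, and let $S$ be the $\tau$-partition sampling ($\Pr(S=C)=\tau/n$ for $C\in\mathcal G$). Let $\mathbf W=\mathrm{diag}(w_1,\dots,w_n)\succ0$, $\mathbf S=\mathbf I_S$ and $\theta_{\mathbf S}=\frac{1}{c_1p_S}=\frac{n}{\tau}$ (here $c_1=1$). Then the sketch residual satisfies $$\rho\le\frac n\tau\max_{C\in\mathcal G}\sum_{i\in C}w_i.$$
   Context: $\mathbf I_S$ is the column submatrix of the $n\times n$ identity with columns indexed by $S$; $e$ is the all-ones vector; $\Pi_{\mathbf S}=\mathbf S(\mathbf S^\top\mathbf W\mathbf S)^\dagger\mathbf S^\top\mathbf W$; the sketch residual is $\rho=\lambda_{\max}\big(\mathbf W^{1/2}(\mathbb{E}[\theta_{\mathbf S}^2\Pi_{\mathbf S}ee^\top\Pi_{\mathbf S}^\top]-ee^\top)\mathbf W^{1/2}\big)$. *)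

From HB Require Import structures.
From mathcomp Require Import all_boot all_order all_algebra.
Set Implicit Arguments. Unset Strict Implicit. Unset Printing Implicit Defensive.
Import Order.TTheory GRing.Theory Num.Theory.
Local Open Scope ring_scope.

(* Column submatrix I_C of the n x n identity, columns indexed by C
   (in increasing order, via enum_val). *)
Definition colsel (R : ringType) (n : nat) (C : {set 'I_n}) : 'M[R]_(n, #|C|) :=
  \matrix_(i < n, j < #|C|) (i == enum_val j)%:R.

(* Pseudo-inverse: in this setting S^T W S is a positive diagonal matrix,
   hence invertible, and its Moore-Penrose pseudo-inverse is its inverse. *)
Definition pinv (R : fieldType) (m : nat) (A : 'M[R]_m) : 'M[R]_m := invmx A.

Definition PiS (R : fieldType) (n : nat) (W : 'M[R]_n) (C : {set 'I_n}) : 'M[R]_n :=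
  colsel R C *m pinv ((colsel R C)^T *m W *m colsel R C) *m (colsel R C)^T *m W.

Definition onesv (R : ringType) (n : nat) : 'cV[R]_n := const_mx 1.

(* E[theta_S^2 Pi_S e e^T Pi_S^T] for the tau-partition sampling:
   Pr(S = C) = tau/n for C in G, theta_S = n/tau. *)
Definition sketch_expect (R : fieldType) (n tau : nat) (G : {set {set 'I_n}})
  (W : 'M[R]_n) : 'M[R]_n :=
  \sum_(C in G) ((tau%:R / n%:R) * (n%:R / tau%:R) ^+ 2) *:
     (PiS W C *m onesv R n *m (onesv R n)^T *m (PiS W C)^T).

(* The matrix whose largest eigenvalue is the sketch residual rho:
   W^{1/2} (E[...] - e e^T) W^{1/2}, with W = diag(w). *)
Definition residual_mx (R : rcfType) (n tau : nat) (G : {set {set 'I_n}})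
  (w : 'rV[R]_n) : 'M[R]_n :=
  let Wh := diag_mx (map_mx Num.sqrt w) in
  Wh *m (sketch_expect tau G (diag_mx w) - onesv R n *m (onesv R n)^T) *m Wh.

From HB Require Import structures.
From mathcomp Require Import all_boot all_order all_algebra.
From mathcomp Require Import ring lra.
Set Implicit Arguments. Unset Strict Implicit. Unset Printing Implicit Defensive.
Import Order.TTheory GRing.Theory Num.Theory.
Local Open Scope ring_scope.

(* For a positive diagonal W, Pi_C e is the indicator vector 1_C of C, so
   E[theta^2 Pi e e^T Pi^T] = (n/tau) sum_C 1_C 1_C^T.  With y = v W^{1/2}, the
   quadratic form of the residual matrix at v is therefore
   (n/tau) sum_C (sum_(i in C) y_i)^2 - (sum_i y_i)^2, and Cauchy-Schwarz on each
   block, y_i = v_i sqrt(w_i), bounds it by (n/tau) max_C (sum_(i in C) w_i) |v|^2.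
   A Rayleigh-quotient argument turns this into the bound on eigenvalues. *)

Lemma sum_eq_natr_mul (R : pzRingType) (T : finType) (x : T) (F : T -> R) :
  \sum_k (k == x)%:R * F k = F x.
Proof.
rewrite (bigD1 x) //= eqxx mul1r big1 ?addr0 // => k /negbTE ->.
by rewrite mul0r.
Qed.

Lemma mulmx_tr_row (R : pzRingType) n (v : 'rV[R]_n) :
  (v *m v^T) 0 0 = \sum_i v 0 i ^+ 2.
Proof. by rewrite mxE; apply: eq_bigr => i _; rewrite mxE expr2. Qed.

Lemma mulmx_tr_row_gt0 (R : realDomainType) n (v : 'rV[R]_n) :
  v != 0 -> 0 < (v *m v^T) 0 0.
Proof.
move=> v0; rewrite mulmx_tr_row lt_def sumr_ge0 ?andbT; last by move=> i _; apply: sqr_ge0.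
apply: contra v0 => /eqP v2_0; apply/eqP/matrixP => i j.
rewrite ord1 mxE; apply/eqP; rewrite -sqrf_eq0; apply/eqP.
by apply: (psumr_eq0P _ v2_0) => // k _; apply: sqr_ge0.
Qed.

Lemma eigenvalue_le_of_quad_form_le (R : realFieldType) n (M : 'M[R]_n) b :
  (forall v : 'rV_n, (v *m M *m v^T) 0 0 <= b * (v *m v^T) 0 0) ->
  forall a, eigenvalue M a -> a <= b.
Proof.
move=> Mb a /eigenvalueP [v Mv v0].
by have := Mb v; rewrite Mv -scalemxAl mxE ler_pM2r // mulmx_tr_row_gt0.
Qed.

Lemma quad_form_outer (R : comPzRingType) n (x : 'rV[R]_n) (u : 'cV[R]_n) :
  (x *m (u *m u^T) *m x^T) 0 0 = ((x *m u) 0 0) ^+ 2.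
Proof.
rewrite mulmxA -[_ *m x^T]mulmxA -trmx_mul.
by rewrite mxE big_ord1 !mxE expr2.
Qed.

Lemma cauchy_schwarz (R : realDomainType) (I : finType) (P : pred I) (f g : I -> R) :
  (\sum_(i | P i) f i * g i) ^+ 2 <=
  (\sum_(i | P i) f i ^+ 2) * (\sum_(i | P i) g i ^+ 2).
Proof.
set A := \sum_(i | P i) f i ^+ 2; set B := \sum_(i | P i) g i ^+ 2.
set S := \sum_(i | P i) f i * g i.
have lagrange_ge0 :
    0 <= \sum_(i | P i) \sum_(j | P j) (f i * g j - f j * g i) ^+ 2.
  by apply: sumr_ge0 => i _; apply: sumr_ge0 => j _; apply: sqr_ge0.
have lagrangeE : \sum_(i | P i) \sum_(j | P j) (f i * g j - f j * g i) ^+ 2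
                 = A * B + A * B - 2 * S * S.
  have rowE i : \sum_(j | P j) (f i * g j - f j * g i) ^+ 2 =
      f i ^+ 2 * B + A * g i ^+ 2 - (2 * (f i * g i)) * S.
    have sqrE j : (f i * g j - f j * g i) ^+ 2 = f i ^+ 2 * g j ^+ 2
        + f j ^+ 2 * g i ^+ 2 - (2 * (f i * g i)) * (f j * g j) by ring.
    under eq_bigr => j _ do rewrite sqrE.
    by rewrite sumrB big_split /= -!mulr_sumr -mulr_suml.
  under eq_bigr => i _ do rewrite rowE.
  by rewrite sumrB big_split /= -!mulr_suml -!mulr_sumr.
rewrite lagrangeE in lagrange_ge0; nra.
Qed.

Lemma sum_partition_sqr_le (R : realDomainType) (T : finType) (G : {set {set T}})
    (f g : T -> R) :
  partition G [set: T] ->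
  \sum_(C in G) (\sum_(i in C) f i * g i) ^+ 2 <=
  (\sum_i f i ^+ 2) * \big[Num.max/0]_(C in G) \sum_(i in C) g i ^+ 2.
Proof.
case/and3P => /eqP coverG trivG _.
have -> : \sum_i f i ^+ 2 = \sum_(C in G) \sum_(i in C) f i ^+ 2.
  by rewrite -big_trivIset // coverG; apply: eq_bigl => i; rewrite inE.
rewrite mulr_suml; apply: ler_sum => C CG.
apply: le_trans (cauchy_schwarz _ f g) _.
apply: ler_wpM2l; first by apply: sumr_ge0 => i _; apply: sqr_ge0.
exact: le_bigmax_cond.
Qed.

Section ColumnSelection.

Variables (R : fieldType) (n : nat) (C : {set 'I_n}) (w : 'rV[R]_n).

Definition indc : 'cV[R]_n := \col_i (i \in C)%:R.

Lemma colsel_diag_colsel :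
  (colsel R C)^T *m diag_mx w *m colsel R C = diag_mx (\row_j w 0 (enum_val j)).
Proof.
apply/matrixP => i j; rewrite mul_mx_diag !mxE.
under eq_bigr => k _ do rewrite !mxE -mulrA.
by rewrite sum_eq_natr_mul (inj_eq enum_val_inj) mulr_natr.
Qed.

Lemma colsel_diag_ones :
  (colsel R C)^T *m (diag_mx w *m onesv R n) =
  diag_mx (\row_j w 0 (enum_val j)) *m onesv R #|C|.
Proof.
apply/matrixP => i j; rewrite !mul_diag_mx !mxE.
under eq_bigr => k _ do rewrite !mxE mulr1.
by rewrite sum_eq_natr_mul mulr1.
Qed.

Lemma colsel_ones : colsel R C *m onesv R #|C| = indc.
Proof.
apply/matrixP => i j; rewrite !mxE.
under eq_bigr => k _ do rewrite !mxE mulr1.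
rewrite -(big_enum_val (A := mem C) (fun x => (i == x)%:R)) /=.
have [iC | iNC] := boolP (i \in C).
  rewrite (bigD1 i) //= eqxx big1 ?addr0 // => x /andP[_ /negbTE].
  by rewrite eq_sym => ->.
by rewrite big1 // => x xC; case: eqP => // ix; rewrite ix xC in iNC.
Qed.

Lemma PiS_ones : (forall i, w 0 i != 0) -> PiS (diag_mx w) C *m onesv R n = indc.
Proof.
move=> w_neq0.
have unitD : (colsel R C)^T *m diag_mx w *m colsel R C \in unitmx.
  rewrite colsel_diag_colsel unitmxE det_diag unitfE.
  by apply/prodf_neq0 => j _; rewrite mxE.
rewrite /PiS /pinv; set D := (_^T *m _ *m _).
rewrite -!mulmxA colsel_diag_ones -colsel_diag_colsel -/D.
by rewrite [invmx _ *m _]mulmxA mulVmx // mul1mx colsel_ones.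
Qed.

Lemma row_mul_indc (x : 'rV[R]_n) : (x *m indc) 0 0 = \sum_(i in C) x 0 i.
Proof.
rewrite mxE [RHS]big_mkcond; apply: eq_bigr => i _.
by rewrite !mxE; case: (i \in C); rewrite ?mulr1 ?mulr0.
Qed.

End ColumnSelection.

Lemma row_mul_ones (R : nzRingType) n (x : 'rV[R]_n) :
  (x *m onesv R n) 0 0 = \sum_i x 0 i.
Proof. by rewrite mxE; apply: eq_bigr => i _; rewrite mxE mulr1. Qed.

Lemma sketch_expect_indc (R : fieldType) n tau (G : {set {set 'I_n}}) (w : 'rV[R]_n) :
  (forall i, w 0 i != 0) ->
  sketch_expect tau G (diag_mx w) =
  (n%:R / tau%:R) *: \sum_(C in G) indc R C *m (indc R C)^T.
Proof.
move=> w_neq0; rewrite /sketch_expect.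
have -> : tau%:R / n%:R * (n%:R / tau%:R) ^+ 2 = n%:R / tau%:R :> R.
  have [->|n0] := eqVneq (n%:R : R) 0; first by rewrite !(mul0r, invr0, mulr0, expr0n).
  have [->|t0] := eqVneq (tau%:R : R) 0; first by rewrite !(mul0r, invr0, mulr0).
  by field; rewrite n0 t0.
rewrite scaler_sumr; apply: eq_bigr => C _.
by rewrite -mulmxA -trmx_mul PiS_ones.
Qed.

Lemma residual_quad_form (R : rcfType) n tau (G : {set {set 'I_n}}) (w : 'rV[R]_n)
    (v : 'rV[R]_n) :
  (forall i, 0 < w 0 i) ->
  (v *m residual_mx tau G w *m v^T) 0 0 =
  n%:R / tau%:R * \sum_(C in G) (\sum_(i in C) v 0 i * Num.sqrt (w 0 i)) ^+ 2
  - (\sum_i v 0 i * Num.sqrt (w 0 i)) ^+ 2.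
Proof.
move=> w_gt0; set x := v *m diag_mx (map_mx Num.sqrt w).
have xE i : x 0 i = v 0 i * Num.sqrt (w 0 i) by rewrite /x mul_mx_diag !mxE.
have -> : v *m residual_mx tau G w *m v^T =
    x *m (sketch_expect tau G (diag_mx w) - onesv R n *m (onesv R n)^T) *m x^T.
  by rewrite /residual_mx trmx_mul tr_diag_mx !mulmxA.
rewrite sketch_expect_indc => [|i]; last by rewrite gt_eqF.
rewrite mulmxBr mulmxBl mxE [X in _ + X]mxE quad_form_outer row_mul_ones.
rewrite -scalemxAr -scalemxAl mulmx_sumr mulmx_suml mxE summxE.
under eq_bigr => C _ do rewrite quad_form_outer row_mul_indc.
by congr (_ * _ - _ ^+ 2); [apply: eq_bigr => C _; congr (_ ^+ 2)|]; apply: eq_bigr.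
Qed.

Theorem theorem4p18 (R : rcfType) (n tau : nat) (G : {set {set 'I_n}})
  (w : 'rV[R]_n)
  (hG : partition G [set: 'I_n])
  (hsize : forall C, C \in G -> #|C| = tau)
  (hw : forall i, 0 < w 0 i) :
  forall a : R, eigenvalue (residual_mx tau G w) a ->
    a <= (n%:R / tau%:R) * \big[Num.max/0]_(C in G) \sum_(i in C) w 0 i.
Proof.
apply: eigenvalue_le_of_quad_form_le => v.
rewrite residual_quad_form // mulmx_tr_row.
apply: ler_wnDr; first by rewrite oppr_le0 sqr_ge0.
rewrite -[X in _ <= X]mulrA; apply: ler_wpM2l; first by rewrite divr_ge0 ?ler0n.
rewrite mulrC.
have sqr_sqrt_w C : \sum_(i in C) w 0 i = \sum_(i in C) Num.sqrt (w 0 i) ^+ 2.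
  by apply: eq_bigr => i _; rewrite sqr_sqrtr ?ltW.
under [X in _ <= _ * X]eq_bigr => C _ do rewrite sqr_sqrt_w.
exact: sum_partition_sqr_le.
Qed.
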